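(* Let $A$ be a hyperoperator on $\mathbb{R}^n$ on the complex Banach space $X$ and let $(\chi_N)$ be an exhausting sequence in $\mathbb{R}^n$. Then $\bigcup_N \operatorname{Im} A(\chi_N)=D_A$, where $D_A=\bigcup_{\phi\in\mathcal{D}(\mathbb{R}^n)}\operatorname{Im}A(\phi)$.
   Context: $X$ is a complex Banach space, $L(X)$ the bounded operators on $X$, $e_X$ the identity. $\mathcal{D}(\mathbb{R}^n)=C_c^\infty(\mathbb{R}^n)$ (complex-valued) with its usual topology. A linear map $A:\mathcal{D}(\mathbb{R}^n)\to L(X)$ is continuous if $A(\phi_j)\to 0$ in operator norm whenever $\phi_j\to0$ in $\mathcal{D}(\mathbb{R}^n)$, and multiplicative if $A(\phi\psi)=A(\phi)A(\psi)$. A hyperoperator on $\mathbb{R}^n$ is a continuous linear multiplicative map $A:\mathcal{D}(\mathbb{R}^n)\to L(X)$ such that (i) $D_A:=\bigcup_{\phi}\operatorname{Im}A(\phi)$ is dense in $X$ and (ii) $\bigcap_\phi\operatorname{Ker}A(\phi)=\{0\}$. A sequence $\chi_N\in\mathcal{D}(\mathbb{R}^n)$ is exhausting if $0\le\chi_N\le1$, $\chi_N\nearrow 1$, and the compact sets $K_N=\{\chi_N=1\}$ satisfy $K_N\subset\operatorname{int}K_{N+1}$ and $\bigcup_N K_N=\mathbb{R}^n$. *)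

From HB Require Import structures.
From mathcomp Require Import all_boot all_order all_algebra.
From mathcomp Require Import all_classical all_reals all_analysis.
From mathcomp Require Import complex.
Set Implicit Arguments. Unset Strict Implicit. Unset Printing Implicit Defensive.
Import Order.TTheory GRing.Theory Num.Theory.
Import numFieldNormedType.Exports.
Local Open Scope classical_set_scope.
Local Open Scope ring_scope.

(* R^n is modelled as the row vectors 'rV[R]_n; the scalar field of X is
   the complex numbers R[i] over the real field R.  Test functions are
   complex-valued functions on R^n. *)

Definition evec (R : realType) (n : nat) (i : 'I_n) : 'rV[R]_n := delta_mx 0 i.

Definition pderiv (R : realType) (n : nat) (i : 'I_n) (f : 'rV[R]_n -> R)
  : 'rV[R]_n -> R := fun x => derive f x (evec R i).

(* iterated partial derivative d_{s_1} ... d_{s_k} f for a multi-index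
   given as a list of directions *)
Definition iter_pderiv (R : realType) (n : nat) (s : seq 'I_n)
  (f : 'rV[R]_n -> R) : 'rV[R]_n -> R := foldr (@pderiv R n) f s.

Definition smooth (R : realType) (n : nat) (f : 'rV[R]_n -> R) : Prop :=
  (forall (s : seq 'I_n) (i : 'I_n) (x : 'rV[R]_n),
      derivable (iter_pderiv s f) x (evec R i)) /\
  (forall s : seq 'I_n, continuous (iter_pderiv s f)).

Definition support_fun (R : realType) (n : nat) (f : 'rV[R]_n -> R[i]) :=
  closure [set x | f x != 0].

Definition test_fun (R : realType) (n : nat) (f : 'rV[R]_n -> R[i]) : Prop :=
  smooth (fun x => complex.Re (f x)) /\ smooth (fun x => complex.Im (f x)) /\
  compact (support_fun f).

Definition iter_pderivC (R : realType) (n : nat) (s : seq 'I_n)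
  (f : 'rV[R]_n -> R[i]) : 'rV[R]_n -> R[i] :=
  fun x => Complex (iter_pderiv s (fun y => complex.Re (f y)) x)
                   (iter_pderiv s (fun y => complex.Im (f y)) x).

Definition test_cvg0 (R : realType) (n : nat) (phi : nat -> 'rV[R]_n -> R[i])
  : Prop :=
  (forall j, test_fun (phi j)) /\
  (exists K : set 'rV[R]_n, compact K /\ forall j, support_fun (phi j) `<=` K) /\
  (forall (s : seq 'I_n) (e : R), 0 < e ->
     \forall j \near \oo, forall x, `|iter_pderivC s (phi j) x| < (e%:C)%C).

Definition bounded_op (R : realType) (X : completeNormedModType R[i])
  (T : X -> X) : Prop := linear T /\ continuous T.

Definition opnorm_cvg0 (R : realType) (X : completeNormedModType R[i])
  (T : nat -> X -> X) : Prop :=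
  forall e : R, 0 < e ->
    \forall j \near \oo, forall x : X, `|T j x| <= (e%:C)%C * `|x|.

Definition dom_hyp (R : realType) (n : nat) (X : completeNormedModType R[i])
  (A : ('rV[R]_n -> R[i]) -> X -> X) : set X :=
  \bigcup_(phi in [set f | test_fun f]) range (A phi).

Definition hyperoperator (R : realType) (n : nat) (X : completeNormedModType R[i])
  (A : ('rV[R]_n -> R[i]) -> X -> X) : Prop :=
  (forall phi, test_fun phi -> bounded_op (A phi)) /\
  (forall phi psi, test_fun phi -> test_fun psi ->
      A (fun x => phi x + psi x) = (fun v => A phi v + A psi v)) /\
  (forall (c : R[i]) phi, test_fun phi ->
      A (fun x => c * phi x) = (fun v => c *: A phi v)) /\
  (forall phi psi, test_fun phi -> test_fun psi ->
      A (fun x => phi x * psi x) = (A phi \o A psi)) /\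
  (forall phi : nat -> 'rV[R]_n -> R[i], test_cvg0 phi ->
      opnorm_cvg0 (fun j => A (phi j))) /\
  dense (dom_hyp A) /\
  (forall v : X, (forall phi, test_fun phi -> A phi v = 0) -> v = 0).

Definition exhausting (R : realType) (n : nat) (chi : nat -> 'rV[R]_n -> R[i])
  : Prop :=
  (forall N, test_fun (chi N)) /\
  (forall N x, 0 <= chi N x <= 1) /\
  (forall N x, chi N x <= chi N.+1 x) /\
  (forall x (e : R), 0 < e -> \forall N \near \oo, `|chi N x - 1| < (e%:C)%C) /\
  (forall N, compact [set x | chi N x = 1]) /\
  (forall N, [set x | chi N x = 1] `<=` interior [set x | chi N.+1 x = 1]) /\
  (\bigcup_N [set x | chi N x = 1] = setT).

(* A test function phi has compact support, which the open sets
   int {chi_N = 1} cover increasingly; hence supp phi lies in one level set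
   {chi_N = 1}, so phi = chi_N phi and, by multiplicativity,
   A(phi) = A(chi_N) A(phi) has its image inside Im A(chi_N). *)
From HB Require Import structures.
From mathcomp Require Import all_boot all_order all_algebra.
From mathcomp Require Import all_classical all_reals all_analysis.
From mathcomp Require Import complex.
Set Implicit Arguments. Unset Strict Implicit. Unset Printing Implicit Defensive.
Import Order.TTheory GRing.Theory Num.Theory.
Import numFieldNormedType.Exports.
Local Open Scope classical_set_scope.
Local Open Scope ring_scope.

Lemma compact_nondecreasing_open_cover (T : ptopologicalType)
    (U : nat -> set T) (C : set T) :
  (forall i, open (U i)) -> nondecreasing_seq U -> compact C ->
  C `<=` \bigcup_i U i -> exists N, C `<=` U N.
Proof.
move=> oU ndU; rewrite compact_cover => /(_ nat setT U) coverC CU.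
have [|D _ CD] := coverC (fun i _ => oU i); first by move=> x /CU [i _ Ux]; exists i.
exists (\max_(i <- finmap.enum_fset D) i)%N => x /CD [i Di Uix].
by move/subsetPset: (ndU _ _ (@leq_bigmax_seq _ _ xpredT id i Di isT)); apply.
Qed.

Lemma mul_eq1_on_nonzero (T : Type) (V : pzRingType) (g f : T -> V) :
  [set x | f x != 0] `<=` [set x | g x = 1] -> (fun x => g x * f x) = f.
Proof.
move=> fg; apply/funext => x.
by have [->|/fg ->] := eqVneq (f x) 0; rewrite ?mulr0 ?mul1r.
Qed.

Section Exhausting.
Variables (R : realType) (n : nat) (chi : nat -> 'rV[R]_n -> R[i]).
Hypothesis chi_exh : exhausting chi.

Let level N := [set x | chi N x = 1].

Lemma exhausting_compact_sub_level (C : set 'rV[R]_n) :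
  compact C -> exists N, C `<=` [set x | chi N x = 1].
Proof.
case: chi_exh => _ [_ [_ [_ [_ [level_int level_cover]]]]] cC.
have int_nd : nondecreasing_seq (fun N => interior (level N) : set 'rV[R]_n).
  apply/nondecreasing_seqP => N; apply/subsetPset/interiorS.
  by move=> x /level_int/interior_subset.
have int_cover : C `<=` \bigcup_N interior (level N).
  move=> x _; have : (\bigcup_N level N) x by rewrite level_cover.
  by case=> N _ /level_int xN; exists N.+1.
have [N CN] := compact_nondecreasing_open_cover
  (fun N => @open_interior _ (level N)) int_nd cC int_cover.
by exists N => x /CN/interior_subset.
Qed.

End Exhausting.

Lemma hyperoperator_range_mul (R : realType) (n : nat)
    (X : completeNormedModType R[i]) (A : ('rV[R]_n -> R[i]) -> X -> X)
    (psi phi : 'rV[R]_n -> R[i]) :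
  hyperoperator A -> test_fun psi -> test_fun phi ->
  range (A (fun x => psi x * phi x)) `<=` range (A psi).
Proof.
move=> [_ [_ [_ [A_mul _]]]] tpsi tphi _ [v _ <-].
by rewrite A_mul //; exists (A phi v).
Qed.

Theorem lemma3p1 (R : realType) (n : nat) (X : completeNormedModType R[i])
  (A : ('rV[R]_n -> R[i]) -> X -> X) (chi : nat -> 'rV[R]_n -> R[i]) :
  hyperoperator A -> exhausting chi ->
  \bigcup_N range (A (chi N)) = dom_hyp A.
Proof.
move=> hypA chi_exh; have chi_test := chi_exh.1.
apply/seteqP; split=> [y [N _ AchiN_y]|y [phi tphi A_phi_y]].
  by exists (chi N) => //; exact: chi_test.
have [N supp_sub] := exhausting_compact_sub_level chi_exh tphi.2.2.
have phiE : (fun x => chi N x * phi x) = phi.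
  by apply: mul_eq1_on_nonzero => x /(@subset_closure _ _ x)/supp_sub.
exists N => //; apply: (hyperoperator_range_mul hypA (chi_test N) tphi).
by rewrite phiE.
Qed.
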